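(* Let $(\mathcal{M},d)$ be an NPC space, $\gamma:[0,1]\to\mathcal{M}$ a geodesic and $\alpha\in[1,2]$. Then for every $\delta\ge0$, $t\in[0,1]$ and $z\in\mathcal{M}$, $$ d(\gamma_t,z)^\alpha\le(1+\delta)^{1-\alpha/2}\left[(1-t)^{\alpha/2}d(\gamma_0,z)^\alpha+t^{\alpha/2}d(\gamma_1,z)^\alpha\right]-\delta^{1-\alpha/2}\left[t(1-t)\,d(\gamma_0,\gamma_1)^2\right]^{\alpha/2}, $$ with the convention $0^0=1$.
   Context: A Polish space $(\mathcal{M},d)$ is an (global) NPC space if for any $x_0,x_1\in\mathcal{M}$ there is $y\in\mathcal{M}$ with $d(z,y)^2\le\frac12d(z,x_0)^2+\frac12d(z,x_1)^2-\frac14d(x_0,x_1)^2$ for all $z\in\mathcal{M}$. A geodesic is a map $\gamma:[0,1]\to\mathcal{M}$ with $d(\gamma_s,\gamma_t)=|s-t|\,d(\gamma_0,\gamma_1)$ for all $s,t$. In NPC spaces any two points are joined by a unique geodesic, and the CN inequality $d(\gamma_t,y)^2\le(1-t)d(\gamma_0,y)^2+t\,d(\gamma_1,y)^2-t(1-t)d(\gamma_0,\gamma_1)^2$ holds. *)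

From Stdlib Require Import Reals Lra.
Open Scope R_scope.

Definition is_metric {M : Type} (d : M -> M -> R) : Prop :=
  (forall x y, 0 <= d x y) /\
  (forall x y, d x y = 0 <-> x = y) /\
  (forall x y, d x y = d y x) /\
  (forall x y z, d x z <= d x y + d y z).

Definition metric_complete {M : Type} (d : M -> M -> R) : Prop :=
  forall u : nat -> M,
    (forall eps, 0 < eps -> exists N, forall m n, (N <= m)%nat -> (N <= n)%nat ->
        d (u m) (u n) < eps) ->
    exists l, forall eps, 0 < eps -> exists N, forall n, (N <= n)%nat -> d (u n) l < eps.

Definition metric_separable {M : Type} (d : M -> M -> R) : Prop :=
  exists s : nat -> M, forall x eps, 0 < eps -> exists n, d x (s n) < eps.

Definition polish {M : Type} (d : M -> M -> R) : Prop :=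
  is_metric d /\ metric_complete d /\ metric_separable d.

Definition NPC {M : Type} (d : M -> M -> R) : Prop :=
  polish d /\
  forall x0 x1 : M, exists y : M, forall z : M,
    (d z y)^2 <= / 2 * (d z x0)^2 + / 2 * (d z x1)^2 - / 4 * (d x0 x1)^2.

(* Geodesic gamma : [0,1] -> M, represented as a function on R restricted to [0,1]. *)
Definition geodesic {M : Type} (d : M -> M -> R) (gamma : R -> M) : Prop :=
  forall s t, 0 <= s <= 1 -> 0 <= t <= 1 ->
    d (gamma s) (gamma t) = Rabs (s - t) * d (gamma 0) (gamma 1).

(* Real power x^a for x >= 0, with the convention 0^0 = 1 (and 0^a = 0 for a <> 0). *)
Definition rpow (x a : R) : R :=
  if Req_EM_T x 0 then (if Req_EM_T a 0 then 1 else 0) else Rpower x a.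

From Stdlib Require Import Reals Lra.
Open Scope R_scope.

(* With u = (1-t) d(g0,z)^2, v = t d(g1,z)^2 and w = t(1-t) d(g0,g1)^2, the CN
   inequality reads d(gt,z)^2 <= u + v - w.  For p = alpha/2 in [1/2, 1] and
   q = 1 - p, Hölder's inequality for two terms gives
   (u+v-w)^p 1^q + w^p delta^q <= (u+v)^p (1+delta)^q, and (u+v)^p <= u^p + v^p
   since p <= 1.  CN itself comes from the NPC midpoint inequality: the points
   of a geodesic are midpoints, so the defect of CN along the geodesic is a
   continuous midpoint-convex function vanishing at both ends. *)

Lemma rpow_pos x a : 0 < x -> rpow x a = Rpower x a.
Proof. intro Hx; unfold rpow; destruct (Req_EM_T x 0); [lra | reflexivity]. Qed.

Lemma rpow_0_l a : a <> 0 -> rpow 0 a = 0.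
Proof.
intro Ha; unfold rpow.
destruct (Req_EM_T 0 0); [|lra]; destruct (Req_EM_T a 0); [lra | reflexivity].
Qed.

Lemma rpow_ge0 x a : 0 <= rpow x a.
Proof.
unfold rpow; destruct (Req_EM_T x 0).
- destruct (Req_EM_T a 0); lra.
- left; apply exp_pos.
Qed.

Lemma rpow_0_r x : rpow x 0 = 1.
Proof.
unfold rpow; destruct (Req_EM_T x 0).
- destruct (Req_EM_T 0 0); lra.
- unfold Rpower; rewrite Rmult_0_l; apply exp_0.
Qed.

Lemma rpow_1_r x : 0 <= x -> rpow x 1 = x.
Proof.
intro Hx; destruct (Req_dec x 0) as [->|Hx0].
- apply rpow_0_l; lra.
- rewrite rpow_pos by lra; apply Rpower_1; lra.
Qed.

Lemma rpow_1_l a : rpow 1 a = 1.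
Proof. rewrite rpow_pos by lra; unfold Rpower; rewrite ln_1, Rmult_0_r; apply exp_0. Qed.

Lemma rpow_le_compat x y a : 0 < a -> 0 <= x <= y -> rpow x a <= rpow y a.
Proof.
intros Ha Hxy; destruct (Req_dec x 0) as [->|Hx0].
- rewrite rpow_0_l by lra; apply rpow_ge0.
- rewrite !rpow_pos by lra; apply Rle_Rpower_l; lra.
Qed.

Lemma rpow_mul x y a : a <> 0 -> 0 <= x -> 0 <= y -> rpow (x * y) a = rpow x a * rpow y a.
Proof.
intros Ha Hx Hy.
destruct (Req_dec x 0) as [->|Hx0]; [rewrite Rmult_0_l, rpow_0_l by lra; ring|].
destruct (Req_dec y 0) as [->|Hy0]; [rewrite Rmult_0_r, rpow_0_l by lra; ring|].
rewrite !rpow_pos by nra; symmetry; apply Rpower_mult_distr; lra.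
Qed.

Lemma rpow_sqr x a : a <> 0 -> 0 <= x -> rpow x (2 * a) = rpow (x ^ 2) a.
Proof.
intros Ha Hx; destruct (Req_dec x 0) as [->|Hx0].
- replace (0 ^ 2) with 0 by ring; rewrite !rpow_0_l by lra; reflexivity.
- rewrite !rpow_pos by nra; unfold Rpower.
  rewrite <- Rsqr_pow2; unfold Rsqr; rewrite ln_mult by lra; f_equal; ring.
Qed.

Lemma rpow_ge_self s p : 0 <= s <= 1 -> 0 < p <= 1 -> s <= rpow s p.
Proof.
intros Hs Hp; destruct (Req_dec s 0) as [->|Hs0]; [rewrite rpow_0_l by lra; lra|].
rewrite rpow_pos by lra; unfold Rpower; rewrite <- (exp_ln s) at 1 by lra.
assert (Hln : ln s <= 0).
{ destruct (Req_dec s 1) as [->|Hs1]; [rewrite ln_1; lra|].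
  rewrite <- ln_1; left; apply ln_increasing; lra. }
destruct (Rle_lt_or_eq_dec (ln s) (p * ln s)) as [Hlt|Heq]; [nra| |].
- left; apply exp_increasing, Hlt.
- rewrite <- Heq; lra.
Qed.

(* Put G := X^p Y^q; then X/G = exp (ln X - ln G) >= 1 + ln X - ln G, similarly
   for Y, and the p,q-weighted sum of the logarithmic terms vanishes. *)
Lemma rpow_young X Y p q : 0 <= X -> 0 <= Y -> 0 < p -> 0 < q -> p + q = 1 ->
  rpow X p * rpow Y q <= p * X + q * Y.
Proof.
intros HX HY Hp Hq Hpq.
destruct (Req_dec X 0) as [->|HX0]; [rewrite rpow_0_l by lra; nra|].
destruct (Req_dec Y 0) as [->|HY0]; [rewrite (rpow_0_l q) by lra; nra|].
rewrite !rpow_pos by lra; unfold Rpower.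
set (G := exp (p * ln X) * exp (q * ln Y)).
assert (HG : 0 < G) by (apply Rmult_lt_0_compat; apply exp_pos).
assert (lnG : ln G = p * ln X + q * ln Y)
  by (unfold G; rewrite ln_mult, !ln_exp by apply exp_pos; reflexivity).
assert (HXG : G * (1 + (ln X - ln G)) <= X).
{ replace X with (G * exp (ln X - ln G)) at 2
    by (unfold Rminus; rewrite exp_plus, exp_Ropp, !exp_ln by lra; field; lra).
  apply Rmult_le_compat_l; [lra | apply exp_ineq1_le]. }
assert (HYG : G * (1 + (ln Y - ln G)) <= Y).
{ replace Y with (G * exp (ln Y - ln G)) at 2
    by (unfold Rminus; rewrite exp_plus, exp_Ropp, !exp_ln by lra; field; lra).
  apply Rmult_le_compat_l; [lra | apply exp_ineq1_le]. }
assert (Hsum : p * (G * (1 + (ln X - ln G))) + q * (G * (1 + (ln Y - ln G))) = G).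
{ rewrite lnG; replace q with (1 - p) by lra; ring. }
nra.
Qed.

Lemma rpow_holder2 A B C E p q : 0 <= A -> 0 <= B -> 0 <= C -> 0 <= E ->
  0 <= p -> 0 <= q -> p + q = 1 ->
  rpow A p * rpow C q + rpow B p * rpow E q <= rpow (A + B) p * rpow (C + E) q.
Proof.
intros HA HB HC HE Hp Hq Hpq.
destruct (Req_dec p 0) as [Hp0|Hp0].
{ subst p; replace q with 1 by lra; rewrite !rpow_0_r, !rpow_1_r by lra; lra. }
destruct (Req_dec q 0) as [Hq0|Hq0].
{ subst q; replace p with 1 by lra; rewrite !rpow_0_r, !rpow_1_r by lra; lra. }
destruct (Req_dec (A + B) 0) as [HS|HS].
{ replace A with 0 by lra; replace B with 0 by lra; rewrite Rplus_0_r, !rpow_0_l by lra; lra. }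
destruct (Req_dec (C + E) 0) as [HT|HT].
{ replace C with 0 by lra; replace E with 0 by lra; rewrite Rplus_0_r, !(rpow_0_l q) by lra; lra. }
set (a := A / (A + B)); set (b := B / (A + B)).
set (c := C / (C + E)); set (e := E / (C + E)).
assert (Hab : a + b = 1) by (unfold a, b; field; lra).
assert (Hce : c + e = 1) by (unfold c, e; field; lra).
assert (eA : A = (A + B) * a) by (unfold a; field; lra).
assert (eB : B = (A + B) * b) by (unfold b; field; lra).
assert (eC : C = (C + E) * c) by (unfold c; field; lra).
assert (eE : E = (C + E) * e) by (unfold e; field; lra).
assert (0 <= a /\ 0 <= b /\ 0 <= c /\ 0 <= e) as (Ha & Hb & Hc & He)
  by (repeat split; nra).
assert (HS0 : 0 < A + B) by lra; assert (HT0 : 0 < C + E) by lra.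
set (S := A + B) in *; set (T := C + E) in *.
rewrite eA, eB, eC, eE, !rpow_mul by lra.
pose proof (rpow_young a c p q Ha Hc ltac:(lra) ltac:(lra) Hpq).
pose proof (rpow_young b e p q Hb He ltac:(lra) ltac:(lra) Hpq).
pose proof (rpow_ge0 S p); pose proof (rpow_ge0 T q).
assert (Hsum : rpow a p * rpow c q + rpow b p * rpow e q <= 1) by nra.
assert (0 <= rpow S p * rpow T q) by nra.
nra.
Qed.

Lemma rpow_subadditive u v p : 0 <= u -> 0 <= v -> 0 < p <= 1 ->
  rpow (u + v) p <= rpow u p + rpow v p.
Proof.
intros Hu Hv Hp.
destruct (Req_dec (u + v) 0) as [HS|HS].
{ replace u with 0 by lra; replace v with 0 by lra; rewrite Rplus_0_r, !rpow_0_l by lra; lra. }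
set (a := u / (u + v)); set (b := v / (u + v)).
assert (Hab : a + b = 1) by (unfold a, b; field; lra).
assert (eu : u = (u + v) * a) by (unfold a; field; lra).
assert (ev : v = (u + v) * b) by (unfold b; field; lra).
assert (0 <= a /\ 0 <= b) as [Ha Hb] by (split; nra).
assert (HS0 : 0 < u + v) by lra; set (S := u + v) in *.
rewrite eu, ev; rewrite !rpow_mul by lra.
pose proof (rpow_ge_self a p ltac:(lra) Hp); pose proof (rpow_ge_self b p ltac:(lra) Hp).
pose proof (rpow_ge0 S p).
nra.
Qed.

Lemma lipschitz_continuity_pt f K x : 0 <= K ->
  (forall s t, Rabs (f s - f t) <= K * Rabs (s - t)) -> continuity_pt f x.
Proof.
intros HK Hf eps Heps; exists (eps / (K + 1)); split.
- apply Rdiv_lt_0_compat; lra.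
- intros y [_ Hy]; simpl in *; unfold R_dist in *.
  assert (E : (K + 1) * (eps / (K + 1)) = eps) by (field; lra).
  pose proof (Hf y x); pose proof (Rabs_pos (y - x)); nra.
Qed.

(* The maximum of f on [a, b] is attained at some m; m is the midpoint of
   an endpoint e and of 2m - e, which lies in [a, b], so f m <= f e <= 0. *)
Lemma midpoint_convex_nonpos f a b : a <= b ->
  (forall x, a <= x <= b -> continuity_pt f x) ->
  (forall s u, a <= s <= b -> a <= u <= b -> f ((s + u) / 2) <= (f s + f u) / 2) ->
  f a <= 0 -> f b <= 0 -> forall t, a <= t <= b -> f t <= 0.
Proof.
intros Hab Hcont Hmid Ha Hb t Ht.
destruct (continuity_ab_maj f a b Hab Hcont) as [m [Hmax Hm]].
enough (f m <= 0) by (specialize (Hmax t Ht); lra).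
destruct (Rle_dec (m - a) (b - m)).
- pose proof (Hmid a (2 * m - a) ltac:(lra) ltac:(lra)) as H.
  replace ((a + (2 * m - a)) / 2) with m in H by field.
  pose proof (Hmax (2 * m - a) ltac:(lra)); lra.
- pose proof (Hmid (2 * m - b) b ltac:(lra) ltac:(lra)) as H.
  replace ((2 * m - b + b) / 2) with m in H by field.
  pose proof (Hmax (2 * m - b) ltac:(lra)); lra.
Qed.

Definition clamp01 (t : R) : R := Rmax 0 (Rmin 1 t).

Lemma clamp01_lipschitz s t : Rabs (clamp01 s - clamp01 t) <= 1 * Rabs (s - t).
Proof.
unfold clamp01, Rmax, Rmin; repeat destruct Rle_dec; unfold Rabs;
  repeat destruct Rcase_abs; lra.
Qed.

Lemma clamp01_range t : 0 <= clamp01 t <= 1.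
Proof. unfold clamp01, Rmax, Rmin; repeat destruct Rle_dec; lra. Qed.

Lemma clamp01_id t : 0 <= t <= 1 -> clamp01 t = t.
Proof. intro; unfold clamp01, Rmax, Rmin; repeat destruct Rle_dec; lra. Qed.

Section NPCMetric.
Variables (M : Type) (d : M -> M -> R).
Hypothesis d_metric : is_metric d.
Hypothesis d_midpoint : forall x0 x1 : M, exists y : M, forall z : M,
  (d z y)^2 <= / 2 * (d z x0)^2 + / 2 * (d z x1)^2 - / 4 * (d x0 x1)^2.

(* Evaluating the NPC inequality at z := m forces d m y = 0, i.e. y = m. *)
Lemma npc_midpoint_ineq x0 x1 m :
  d m x0 = d x0 x1 / 2 -> d m x1 = d x0 x1 / 2 -> forall z,
  (d z m)^2 <= / 2 * (d z x0)^2 + / 2 * (d z x1)^2 - / 4 * (d x0 x1)^2.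
Proof.
destruct d_metric as (d_ge0 & d_eq0 & _).
intros H0 H1 z; destruct (d_midpoint x0 x1) as [y Hy].
enough (m = y) by (subst; apply Hy).
apply d_eq0.
pose proof (Hy m) as Hm; rewrite H0, H1 in Hm; pose proof (d_ge0 m y); nra.
Qed.

Variable gamma : R -> M.
Hypothesis gamma_geodesic : geodesic d gamma.

Let D := d (gamma 0) (gamma 1).

Lemma geodesic_midpoint_ineq z s u : 0 <= s <= 1 -> 0 <= u <= 1 ->
  d (gamma ((s + u) / 2)) z ^ 2 <=
  / 2 * d (gamma s) z ^ 2 + / 2 * d (gamma u) z ^ 2 - / 4 * ((u - s) * D) ^ 2.
Proof.
destruct d_metric as (_ & _ & d_sym & _).
intros Hs Hu.
assert (Hhalf : forall r, r = s \/ r = u -> Rabs ((s + u) / 2 - r) = Rabs (s - u) / 2)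
  by (intros r [-> | ->]; unfold Rabs; repeat destruct Rcase_abs; lra).
assert (Hsu : d (gamma s) (gamma u) = Rabs (s - u) * D) by (apply gamma_geodesic; lra).
assert (Hsq : (Rabs (s - u) * D) ^ 2 = ((u - s) * D) ^ 2)
  by (rewrite !Rpow_mult_distr, pow2_abs; ring).
pose proof (npc_midpoint_ineq (gamma s) (gamma u) (gamma ((s + u) / 2))) as Hnpc.
rewrite !(d_sym _ z), <- Hsq, <- Hsu; apply Hnpc.
- rewrite gamma_geodesic, Hhalf, Hsu by lra; fold D; field.
- rewrite gamma_geodesic, Hhalf, Hsu by lra; fold D; field.
Qed.

Lemma geodesic_dist_lipschitz z s t : 0 <= s <= 1 -> 0 <= t <= 1 ->
  Rabs (d (gamma s) z - d (gamma t) z) <= D * Rabs (s - t).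
Proof.
destruct d_metric as (_ & _ & d_sym & d_tri).
intros Hs Ht.
assert (Hst : d (gamma s) (gamma t) = Rabs (s - t) * D) by (apply gamma_geodesic; lra).
pose proof (d_tri (gamma s) (gamma t) z); pose proof (d_tri (gamma t) (gamma s) z).
rewrite (d_sym (gamma t) (gamma s)) in *.
apply Rabs_le; lra.
Qed.

Lemma geodesic_CN z t : 0 <= t <= 1 ->
  d (gamma t) z ^ 2 <=
  (1 - t) * d (gamma 0) z ^ 2 + t * d (gamma 1) z ^ 2 - t * (1 - t) * D ^ 2.
Proof.
intro Ht.
set (a := d (gamma 0) z); set (b := d (gamma 1) z).
(* Clamping makes the defect a function on all of R, as continuity_pt needs. *)
set (f := fun s => d (gamma (clamp01 s)) z).
set (chi := fun s => f s * f s - ((1 - clamp01 s) * (a * a) + clamp01 s * (b * b)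
                                   - clamp01 s * (1 - clamp01 s) * (D * D))).
assert (chiE : forall s, 0 <= s <= 1 ->
  chi s = d (gamma s) z ^ 2 - ((1 - s) * a ^ 2 + s * b ^ 2 - s * (1 - s) * D ^ 2))
  by (intros s Hs; unfold chi, f; rewrite clamp01_id by lra; ring).
enough (chi t <= 0) by (rewrite chiE in * by lra; lra).
apply (midpoint_convex_nonpos chi 0 1); try lra.
- assert (D_ge0 : 0 <= D) by apply d_metric.
  assert (clamp_cont : forall x, continuity_pt clamp01 x)
    by (intro; apply (lipschitz_continuity_pt _ 1); [lra | apply clamp01_lipschitz]).
  assert (f_cont : forall x, continuity_pt f x).
  { intro x; apply (lipschitz_continuity_pt _ D _ D_ge0); intros s0 t0; unfold f.
    eapply Rle_trans; [apply geodesic_dist_lipschitz; apply clamp01_range|].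
    pose proof (clamp01_lipschitz s0 t0); nra. }
  intros x _; unfold chi.
  repeat first [ apply continuity_pt_minus | apply continuity_pt_plus
               | apply continuity_pt_mult | apply clamp_cont | apply f_cont
               | apply continuity_pt_const; intros ? ?; reflexivity ].
- intros s u Hs Hu; rewrite !chiE by lra.
  pose proof (geodesic_midpoint_ineq z s u Hs Hu); lra.
- rewrite chiE by lra; unfold a; lra.
- rewrite chiE by lra; unfold b; lra.
Qed.

End NPCMetric.

Theorem proposition4p1 (M : Type) (d : M -> M -> R) (gamma : R -> M) (alpha : R) :
  NPC d -> geodesic d gamma -> 1 <= alpha <= 2 ->
  forall (delta t : R) (z : M), 0 <= delta -> 0 <= t <= 1 ->
    rpow (d (gamma t) z) alpha <=
      rpow (1 + delta) (1 - alpha / 2) *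
        (rpow (1 - t) (alpha / 2) * rpow (d (gamma 0) z) alpha
         + rpow t (alpha / 2) * rpow (d (gamma 1) z) alpha)
      - rpow delta (1 - alpha / 2) * rpow (t * (1 - t) * (d (gamma 0) (gamma 1))^2) (alpha / 2).
Proof.
intros [[d_metric _] d_midpoint] gamma_geodesic Halpha delta t z Hdelta Ht.
pose proof (geodesic_CN M d d_metric d_midpoint gamma gamma_geodesic z t Ht) as Hcn.
destruct d_metric as [d_ge0 _].
set (p := alpha / 2); replace alpha with (2 * p) by (unfold p; field).
assert (Hp : 0 < p <= 1) by (unfold p; lra).
rewrite !rpow_sqr, <- !rpow_mul by first [lra | apply d_ge0 | apply pow2_ge_0].
set (x := d (gamma t) z) in *.
set (u := (1 - t) * d (gamma 0) z ^ 2) in *; set (v := t * d (gamma 1) z ^ 2) in *.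
set (w := t * (1 - t) * d (gamma 0) (gamma 1) ^ 2) in *.
assert (0 <= u /\ 0 <= v /\ 0 <= w) as (Hu & Hv & Hw).
{ unfold u, v, w; repeat split;
    repeat apply Rmult_le_pos; first [lra | apply pow2_ge_0 | apply d_ge0]. }
pose proof (pow2_ge_0 x).
assert (Hx : rpow (x ^ 2) p <= rpow (u + v - w) p) by (apply rpow_le_compat; lra).
pose proof (rpow_holder2 (u + v - w) w 1 delta p (1 - p)
  ltac:(lra) Hw ltac:(lra) Hdelta ltac:(lra) ltac:(lra) ltac:(ring)) as Hholder.
rewrite rpow_1_l, Rmult_1_r in Hholder; replace (u + v - w + w) with (u + v) in Hholder by ring.
pose proof (rpow_subadditive u v p Hu Hv Hp) as Hsub.
pose proof (Rmult_le_compat_r (rpow (1 + delta) (1 - p)) _ _ (rpow_ge0 _ _) Hsub).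
lra.
Qed.
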